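(* Let $n \geq 18$ be divisible by $3$, and let $A_n$ be the set of binary words of length $n$ that contain no $3$-antipower as a factor. Then $$A_n = \mathcal{C}_n\left(0^* \cup (01)^* \cup (01)^* 0 \cup 0^*10^* \cup 0^*011 \cup 0^*101\right).$$
   Context: Words are over $\{0,1\}$. A $3$-antipower is a word $u_1u_2u_3$ with $|u_1|=|u_2|=|u_3|$ and $u_1,u_2,u_3$ pairwise distinct; a factor is a contiguous subword. For a word $w$, $w^* = \{\varepsilon, w, w^2, \dots\}$, and sets of words are written as regular expressions (concatenation of sets, union). For a language $L \subseteq \{0,1\}^*$, $\mathcal{C}_n(L)$ denotes the closure of $L \cap \{0,1\}^n$ under bitwise complementation (exchanging $0$ and $1$) and reversal; i.e., it consists of all length-$n$ words of $L$, their bitwise complements, their reversals, and the bitwise complements of their reversals. *)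

From mathcomp Require Import all_boot.
Set Implicit Arguments. Unset Strict Implicit. Unset Printing Implicit Defensive.

(* Binary words: seq bool, with letter 0 = false and letter 1 = true. *)
Definition word := seq bool.

Definition factor (u w : word) : Prop := exists p s : word, w = p ++ u ++ s.

Definition antipower3 (v : word) : Prop :=
  exists u1 u2 u3 : word, v = u1 ++ u2 ++ u3 /\
    size u1 = size u2 /\ size u2 = size u3 /\
    u1 <> u2 /\ u1 <> u3 /\ u2 <> u3.

Definition A (n : nat) (w : word) : Prop :=
  size w = n /\ ~ (exists v, factor v w /\ antipower3 v).

Definition wpow (u : word) (k : nat) : word := flatten (nseq k u).

Definition L (w : word) : Prop :=
     (exists k, w = wpow [:: false] k)
  \/ (exists k, w = wpow [:: false; true] k)
  \/ (exists k, w = wpow [:: false; true] k ++ [:: false])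
  \/ (exists i j, w = wpow [:: false] i ++ [:: true] ++ wpow [:: false] j)
  \/ (exists k, w = wpow [:: false] k ++ [:: false; true; true])
  \/ (exists k, w = wpow [:: false] k ++ [:: true; false; true]).

Definition compl (w : word) : word := map negb w.

Definition Cn (P : word -> Prop) (n : nat) (w : word) : Prop :=
  exists v, P v /\ size v = n /\
    (w = v \/ w = compl v \/ w = rev v \/ w = compl (rev v)).

From mathcomp Require Import all_boot zify.
Set Implicit Arguments. Unset Strict Implicit. Unset Printing Implicit Defensive.

(* Up to complement, every antipower-free word of length at least 18 has at most one 1,
   is alternating, or is x 0^j y for one of nine short frames (x, y).  This is checked by
   enumeration at length 18 and propagates to longer words by appending letters: extending
   such a word either keeps its shape or creates an antipower, either in a short suffix or of
   the form x' 0^j y' where x' and y' contain a 1.  The latter splits as x' 0^a | 0^l | 0^b y'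
   as soon as j is long and the length is a multiple of 3; in length 3l this also rules out
   the frames with a 1 on both sides, and what remains is C_n(L).  Conversely, a long zero
   prefix takes no part in an antipower, so 0^k 011 and 0^k 101 are antipower-free by a
   finite check. *)

Definition has_antipower (w : word) : Prop := exists v, factor v w /\ antipower3 v.

Lemma factorP (u w : word) : reflect (factor u w) (infix u w).
Proof. exact: infixP. Qed.

Lemma antipower3_has_antipower v : antipower3 v -> has_antipower v.
Proof. by move=> hv; exists v; split=> //; apply/factorP/infix_refl. Qed.

Lemma has_antipower_infix u w : infix u w -> has_antipower u -> has_antipower w.
Proof.
by move=> uw [v [/factorP vu hv]]; exists v; split=> //; apply/factorP/(infix_trans vu).
Qed.

Lemma complK : involutive compl.
Proof. exact: (mapK negbK). Qed.

Lemma size_compl w : size (compl w) = size w.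
Proof. exact: size_map. Qed.

Lemma compl_cat u v : compl (u ++ v) = compl u ++ compl v.
Proof. exact: map_cat. Qed.

Lemma compl_rcons w c : compl (rcons w c) = rcons (compl w) (~~ c).
Proof. exact: map_rcons. Qed.

Lemma rev_compl w : rev (compl w) = compl (rev w).
Proof. by rewrite /compl map_rev. Qed.

Lemma antipower3_compl v : antipower3 v -> antipower3 (compl v).
Proof.
move=> [u1 [u2 [u3 [-> [s12 [s23 [n12 [n13 n23]]]]]]]].
exists (compl u1), (compl u2), (compl u3); rewrite !compl_cat !size_compl.
by do !split=> //; move/(inv_inj complK).
Qed.

Lemma antipower3_rev v : antipower3 v -> antipower3 (rev v).
Proof.
move=> [u1 [u2 [u3 [-> [s12 [s23 [n12 [n13 n23]]]]]]]].
exists (rev u3), (rev u2), (rev u1); rewrite !rev_cat !size_rev catA.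
by do !split=> //; try lia; move/(inv_inj revK) => /esym.
Qed.

Lemma has_antipower_compl w : has_antipower (compl w) <-> has_antipower w.
Proof.
suff imp u : has_antipower u -> has_antipower (compl u).
  by split=> /imp; rewrite ?complK.
move=> [v [[p [s ->]] hv]]; exists (compl v); split; last exact: antipower3_compl.
by exists (compl p), (compl s); rewrite !compl_cat.
Qed.

Lemma has_antipower_rev w : has_antipower (rev w) <-> has_antipower w.
Proof.
suff imp u : has_antipower u -> has_antipower (rev u).
  by split=> /imp; rewrite ?revK.
move=> [v [/factorP hvu hv]]; exists (rev v); split; last exact: antipower3_rev.
by apply/factorP; rewrite infix_rev.
Qed.

Definition antipower3b (v : word) : bool :=
  let l := size v %/ 3 in
  (size v == 3 * l) && uniq [:: take l v; take l (drop l v); drop (2 * l) v].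

Lemma antipower3P v : reflect (antipower3 v) (antipower3b v).
Proof.
apply: (iffP andP) => [[/eqP hv]|[u1 [u2 [u3 [-> [s12 [s23 [n12 [n13 n23]]]]]]]]].
  set l := size v %/ 3 in hv *.
  have -> : drop (2 * l) v = drop l (drop l v) by rewrite drop_drop; congr drop; lia.
  rewrite /= !inE => /and3P [/norP [n12 n13] n23 _].
  exists (take l v), (take l (drop l v)), (drop l (drop l v)).
  rewrite !cat_take_drop !size_takel ?size_drop; try lia.
  by do !split=> //; try lia; apply/eqP.
rewrite !size_cat -s23 -s12 (_ : (_ + _) %/ 3 = size u1); last lia.
rewrite take_size_cat // drop_size_cat // take_size_cat //.
rewrite mul2n -addnn -drop_drop drop_size_cat // drop_size_cat //.
split; first by apply/eqP; lia.
by rewrite /= !inE; apply/and3P; split=> //; [apply/norP; split|]; apply/eqP.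
Qed.

Definition factors (w : word) : seq word :=
  [seq take j (drop i w) | i <- iota 0 (size w).+1, j <- iota 0 (size w).+1].

Lemma factorsP u w : reflect (factor u w) (u \in factors w).
Proof.
apply: (iffP allpairsP) => [[[i j] [_ _ ->]]|[p [s ->]]].
  by apply/factorP/(infix_trans (infix_take _ _))/infix_drop.
exists (size p, size u); rewrite !mem_iota !size_cat /=; split; try lia.
by rewrite drop_size_cat // take_size_cat.
Qed.

Definition has_antipowerb (w : word) : bool := has antipower3b (factors w).

Lemma has_antipowerP w : reflect (has_antipower w) (has_antipowerb w).
Proof.
apply: (iffP hasP) => [[v /factorsP hv /antipower3P hv']|[v [/factorsP hv /antipower3P hv']]];
  by exists v.
Qed.

Fixpoint antipower_free_words (k : nat) : seq word :=
  if k is k'.+1 then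
    [seq w <- [seq rcons u c | u <- antipower_free_words k', c <- [:: false; true]]
       | ~~ has_antipowerb w]
  else [:: [::]].

Lemma mem_antipower_free_words w :
  ~ has_antipower w -> w \in antipower_free_words (size w).
Proof.
elim/last_ind: w => [//|p c IH] hfree.
rewrite size_rcons; cbn [antipower_free_words]; rewrite mem_filter; apply/andP; split.
  by apply/negP => /has_antipowerP.
apply/allpairsP; exists (p, c); split=> //; last by case: (c).
by apply: IH => hp; apply: hfree; apply: has_antipower_infix hp; apply: infix_rcons.
Qed.

Lemma count0_nseq (w : word) : count id w = 0 -> w = nseq (size w) false.
Proof. by elim: w => [|[] w IH] //= h; rewrite -IH. Qed.

Lemma count0_eq (u v : word) : size u = size v -> count id u = 0 -> count id v = 0 -> u = v.
Proof. by move=> huv /count0_nseq -> /count0_nseq ->; rewrite huv. Qed.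

Lemma count1_split (w : word) :
  count id w = 1 -> exists i j, w = nseq i false ++ true :: nseq j false.
Proof.
elim: w => [|[] w IH] //= h; last by have [i [j ->]] := IH h; exists i.+1, j.
by exists 0, (size w); rewrite -count0_nseq //; lia.
Qed.

Lemma count_le1_antipower_free (w : word) : count id w <= 1 -> ~ has_antipower w.
Proof.
move=> hw [v [[p [s hpv]] [u1 [u2 [u3 [huv [s12 [s23 [n12 [n13 n23]]]]]]]]]].
move: hw; rewrite hpv huv !count_cat => hw.
case: (posnP (count id u1)) => h1; last by apply: n23; apply: count0_eq => //; lia.
case: (posnP (count id u2)) => h2; first exact/n12/count0_eq.
by apply: n13; apply: count0_eq => //; lia.
Qed.

Definition alt_word (b : bool) (n : nat) : word := mkseq (fun t => odd t (+) b) n.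

Lemma size_alt_word b n : size (alt_word b n) = n.
Proof. exact: size_mkseq. Qed.

Lemma alt_wordD b m n : alt_word b (m + n) = alt_word b m ++ alt_word (odd m (+) b) n.
Proof.
rewrite /alt_word /mkseq iotaD map_cat; congr (_ ++ _).
rewrite -[0 + m]addn0 iotaDl -map_comp; apply: eq_map => t.
by rewrite /= add0n oddD addbA [odd t (+) _]addbC.
Qed.

Lemma alt_word_compl b n : compl (alt_word b n) = alt_word (~~ b) n.
Proof. by rewrite /compl /alt_word /mkseq -map_comp; apply: eq_map => t /=; rewrite addbN. Qed.

Lemma alt_word_double k : alt_word false k.*2 = wpow [:: false; true] k.
Proof. by elim: k => // k IH; rewrite doubleS -add2n alt_wordD IH. Qed.

Lemma infix_alt_word v b n : infix v (alt_word b n) -> exists b', v = alt_word b' (size v).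
Proof.
move=> /infixP [p [s hw]]; exists (odd (size p) (+) b).
have := congr1 size hw; rewrite size_alt_word !size_cat => hn.
move: hw; rewrite hn alt_wordD alt_wordD => /eqP.
by rewrite eqseq_cat ?size_alt_word // eqseq_cat ?size_alt_word // => /and3P [_ /eqP].
Qed.

Lemma alt_word_antipower_free b n : ~ has_antipower (alt_word b n).
Proof.
move=> [v [/factorP /infix_alt_word [b' hv] [u1 [u2 [u3 [huv [s12 [s23 [_ [n13 _]]]]]]]]]].
apply: n13; move: hv; rewrite huv !size_cat -s23 -s12 !alt_wordD => /eqP.
rewrite eqseq_cat ?size_alt_word // eqseq_cat ?size_alt_word ?s12 //.
by rewrite addbA addbb => /and3P [/eqP -> _ /eqP ->].
Qed.

Lemma alt_word_rcons b n c : 8 <= n ->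
  rcons (alt_word b n) c = alt_word b n.+1 \/ has_antipower (rcons (alt_word b n) c).
Proof.
move=> hn; have [->|hc] := eqVneq c (odd n (+) b).
  by left; rewrite -addn1 alt_wordD cats1.
right; rewrite -(subnK hn) alt_wordD rcons_cat.
apply: has_antipower_infix (suffix_infix _ _) _.
have -> : c = ~~ (odd (n - 8) (+) b).
  by move: hc; rewrite -{1}(subnK hn) oddD /= addbF; case: c; case: (_ (+) b).
by apply/has_antipowerP; case: (odd _ (+) b); vm_compute.
Qed.

Lemma antipower3_zero_gap (x y : word) j :
  true \in x -> true \in y -> 3 %| size x + j + size y -> 2 * (size x + size y) <= j ->
  antipower3 (x ++ nseq j false ++ y).
Proof.
move=> hx hy /dvdnP [l hl] hj.
have -> : nseq j false = nseq (l - size x) false ++ nseq l false ++ nseq (l - size y) false.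
  by rewrite -!nseqD; congr nseq; lia.
exists (x ++ nseq (l - size x) false), (nseq l false), (nseq (l - size y) false ++ y).
rewrite !catA !size_cat !size_nseq; do !split; try lia.
- move=> e; suff: true \in nseq l false by rewrite mem_nseq andbF.
  by rewrite -e mem_cat hx.
- move=> /(congr1 (take (size x))); rewrite take_size_cat // takel_cat ?size_nseq; last lia.
  rewrite take_nseq; last lia.
  by move=> e; move: hx; rewrite e mem_nseq andbF.
- move=> e; suff: true \in nseq l false by rewrite mem_nseq andbF.
  by rewrite e mem_cat hy orbT.
Qed.

Definition zero_gap_antipowerb (x y : word) (r : nat) : bool :=
  has (fun i => has (fun k =>
    [&& true \in drop i x, true \in take k y & 3 %| size (drop i x) + r + size (take k y)])
    (iota 0 (size y).+1)) (iota 0 (size x).+1).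

Lemma has_antipower_zero_gap (x y : word) j :
  zero_gap_antipowerb x y (j %% 3) -> 2 * (size x + size y) <= j ->
  has_antipower (x ++ nseq j false ++ y).
Proof.
move=> /hasP [i _ /hasP [k _ /and3P [hx hy hdiv]]] hj.
apply: (@has_antipower_infix (drop i x ++ nseq j false ++ take k y)).
  apply/infixP; exists (take i x), (drop k y).
  by rewrite -!catA cat_take_drop [take i x ++ _]catA cat_take_drop.
apply: antipower3_has_antipower; apply: antipower3_zero_gap => //.
  by move: hdiv; lia.
rewrite size_drop size_take_min; lia.
Qed.

Definition tails : seq word := [:: [:: false; true; true]; [:: true; false; true]].

Definition inner_frames : seq (word * word) :=
  [:: ([:: true], [:: true]); ([:: true], [:: true; true]); ([:: true], [:: true; false]);
      ([:: false; true], [:: true]); ([:: true; true; false], [:: true])].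

Lemma inner_frames_two_sided :
  {in inner_frames, forall xy, (true \in xy.1) && (true \in xy.2)}.
Proof. exact/allP. Qed.

Definition frames : seq (word * word) :=
  [seq ([::], t) | t <- tails] ++ [seq (rev t, [::]) | t <- tails] ++ inner_frames.

Lemma frames_size : {in frames, forall xy, size xy.1 + size xy.2 <= 4}.
Proof. exact/allP. Qed.

Definition framed (w : word) : Prop :=
  exists x y j, (x, y) \in frames /\ w = x ++ nseq j false ++ y.

Definition framedb (w : word) : bool :=
  has (fun xy => (size xy.1 + size xy.2 <= size w) &&
        (w == xy.1 ++ nseq (size w - size xy.1 - size xy.2) false ++ xy.2)) frames.

Lemma framedP w : reflect (framed w) (framedb w).
Proof.
apply: (iffP hasP) => [[[x y] hxy /andP [_ /eqP hw]]|[x [y [j [hxy hw]]]]].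
  by exists x, y, (size w - size x - size y).
exists (x, y) => //; rewrite hw !size_cat size_nseq /=.
by apply/andP; split; [lia | rewrite (_ : _ - _ - _ = j) //; lia].
Qed.

Definition candidate (w : word) : Prop :=
  [\/ count id w <= 1, exists b n, w = alt_word b n | framed w].

Definition candidateb (w : word) : bool :=
  [|| count id w <= 1, w == alt_word (head false w) (size w) | framedb w].

Lemma candidateP w : reflect (candidate w) (candidateb w).
Proof.
apply: (iffP or3P) => -[hw | hw | /framedP hw]; try by [apply: Or31 | apply: Or33].
- by apply: Or32; exists (head false w), (size w); apply/eqP.
- by apply: Or32; case: hw => b [[|n] ->]; rewrite size_alt_word.
Qed.

(* Appending [c] to [x 0^j y], [j >= 10], either lengthens the zero run, lands in another
   frame, creates an antipower in a short suffix, or creates an antipower [x' 0^j y'] for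
   every residue of [j] modulo 3. *)
Definition frame_extends (x y : word) (c : bool) : bool :=
  [|| (y == [::]) && ~~ c, (x, rcons y c) \in frames,
      has_antipowerb (nseq 5 false ++ rcons y c)
    | all (zero_gap_antipowerb x (rcons y c)) (iota 0 3)].

Lemma frames_extend c : {in frames, forall xy, frame_extends xy.1 xy.2 c}.
Proof. by apply/allP; case: c; vm_compute. Qed.

Lemma framed_rcons x y j c : (x, y) \in frames -> 10 <= j ->
  let w := rcons (x ++ nseq j false ++ y) c in framed w \/ has_antipower w.
Proof.
move=> hxy hj w; have /= hsize := frames_size hxy.
have /= := frames_extend c hxy.
rewrite /w !rcons_cat => /or4P [/andP [/eqP hy /negPf hc] | hf | hb | hgap].
- left; subst y c; exists x, [::], j.+1; split=> //.
  by rewrite cats0 -addn1 nseqD.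
- by left; exists x, (rcons y c), j.
- right; rewrite -(subnK (_ : 5 <= j)); last lia.
  rewrite nseqD -catA catA.
  exact/(has_antipower_infix (suffix_infix _ _))/has_antipowerP.
- right; apply: has_antipower_zero_gap; last by rewrite size_rcons; lia.
  by move/allP: hgap; apply; rewrite mem_iota ltn_mod.
Qed.

Lemma short_gap_antipower : {in iota 2 6, forall j,
  has_antipowerb (nseq 10 false ++ true :: nseq j false ++ [:: true])}.
Proof. by apply/allP; vm_compute. Qed.

Lemma count_le1_rcons w c : 18 <= size w -> count id w <= 1 ->
  candidate (rcons w c) \/ has_antipower (rcons w c).
Proof.
move=> hs hw.
have : count id (rcons w c) <= 1 \/ count id w = 1 /\ c.
  rewrite -cats1 count_cat; case: c => /=; last by left; lia.
  by case: (count id w) hw => [|[|]] // _; [left | right].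
case=> [hc | [/count1_split [i [j hij]] ->]]; first by left; apply: Or31.
rewrite {}hij in hs *; rewrite size_cat /= !size_nseq in hs; rewrite rcons_cat rcons_cons -cats1.
case: i hs => [|[|i]] hs.
- by left; apply: Or33; exists [:: true], [:: true], j.
- by left; apply: Or33; exists [:: false; true], [:: true], j.
case: j hs => [|[|j]] hs.
- left; apply: Or33; exists [::], [:: false; true; true], i.+1; split=> //.
  by rewrite -[i.+2]addn1 nseqD -catA.
- by left; apply: Or33; exists [::], [:: true; false; true], i.+2.
right; case: (ltnP j 6) => hj.
  rewrite -(subnK (_ : 10 <= i.+2)); last lia.
  rewrite nseqD -catA; apply: has_antipower_infix (suffix_infix _ _) _.
  by apply/has_antipowerP/short_gap_antipower; rewrite mem_iota; lia.
rewrite -[i.+2]addn2 nseqD -catA; apply: has_antipower_infix (suffix_infix _ _) _.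
change (has_antipower ([:: false; false; true] ++ nseq j.+2 false ++ [:: true])).
apply: has_antipower_zero_gap; last exact: hj.
by move: (j.+2 %% 3) (ltn_mod j.+2 3) => [|[|[|]]].
Qed.

Lemma candidate_rcons w c : 18 <= size w -> candidate w ->
  candidate (rcons w c) \/ has_antipower (rcons w c).
Proof.
move=> hs [hw | [b [n hw]] | [x [y [j [hxy hw]]]]]; first exact: count_le1_rcons.
- subst w; rewrite size_alt_word in hs.
  have [->|] := alt_word_rcons b c (leq_trans (isT : 8 <= 18) hs); last by right.
  by left; apply: Or32; exists b, n.+1.
- have hj : 10 <= j.
    by move: hs (frames_size hxy); rewrite hw !size_cat size_nseq /=; lia.
  by rewrite hw; case: (framed_rcons c hxy hj) => h; [left; apply: Or33 | right].
Qed.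

Lemma antipower_free_words18_candidates :
  {in antipower_free_words 18, forall w, candidateb w || candidateb (compl w)}.
Proof. by apply/allP; vm_compute. Qed.

Lemma antipower_free_candidate w : 18 <= size w -> ~ has_antipower w ->
  candidate w \/ candidate (compl w).
Proof.
elim/last_ind: w => [//|p c IH] hs hfree.
have hp : ~ has_antipower p by move=> h; apply/hfree/(has_antipower_infix (infix_rcons p c)).
rewrite size_rcons in hs; case: (ltnP 17 (size p)) => hp18.
  case: (IH hp18 hp) => hc.
    by case: (candidate_rcons c hp18 hc) => [|//]; left.
  rewrite -size_compl in hp18; rewrite compl_rcons.
  case: (candidate_rcons (~~ c) hp18 hc) => [|h]; first by right.
  by case: hfree; apply/has_antipower_compl; rewrite compl_rcons.
have h18 : size (rcons p c) = 18 by rewrite size_rcons; lia.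
have hmem : rcons p c \in antipower_free_words 18.
  by rewrite -h18; apply: mem_antipower_free_words.
have := antipower_free_words18_candidates hmem.
by case/orP => /candidateP; [left | right].
Qed.

Lemma wpow1 (a : bool) k : wpow [:: a] k = nseq k a.
Proof. by rewrite /wpow; elim: k => //= k ->. Qed.

Lemma alt_word_false_L n : L (alt_word false n).
Proof.
rewrite -(odd_double_half n) addnC alt_wordD alt_word_double odd_double.
by case: (odd n); [do 2 right; left | right; left; rewrite cats0]; exists n./2.
Qed.

Lemma tails_L t j : t \in tails -> L (nseq j false ++ t).
Proof.
rewrite -wpow1 !inE => /orP [] /eqP ->; do 4 right; [left | right]; by exists j.
Qed.

Lemma Cn_L n v : L v -> size v = n -> Cn L n v.
Proof. by move=> hv hs; exists v; do !split=> //; left. Qed.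

Lemma Cn_compl P n w : Cn P n w -> Cn P n (compl w).
Proof.
move=> [v [hv [hs hw]]]; exists v; do 2 split=> //.
by case: hw => [|[|[|]]] ->; rewrite ?complK; tauto.
Qed.

Lemma Cn_rev P n w : Cn P n w -> Cn P n (rev w).
Proof.
move=> [v [hv [hs hw]]]; exists v; do 2 split=> //.
by case: hw => [|[|[|]]] ->; rewrite ?rev_compl ?revK; tauto.
Qed.

Lemma candidate_Cn w : 18 <= size w -> 3 %| size w -> ~ has_antipower w -> candidate w ->
  Cn L (size w) w.
Proof.
move=> hs h3 hfree [hw | [b [n hw]] | [x [y [j [hxy hw]]]]].
- case: (posnP (count id w)) => [/count0_nseq hw0 | hw1].
    by rewrite hw0; apply: Cn_L => //; left; exists (size w); rewrite wpow1.
  have [|i [k ->]] := @count1_split w; first lia.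
  by apply: Cn_L => //; do 3 right; left; exists i, k; rewrite !wpow1.
- rewrite hw size_alt_word; case: b {hw}.
    rewrite -[true]/(~~ false) -alt_word_compl.
    exact/Cn_compl/Cn_L/size_alt_word/alt_word_false_L.
  exact/Cn_L/size_alt_word/alt_word_false_L.
move: hs h3 hfree (frames_size hxy); rewrite hw {w hw}.
rewrite !mem_cat in hxy; case/or3P: hxy => [/mapP [t ht [-> ->]] | /mapP [t ht [-> ->]] | hinner].
- by move=> *; apply: Cn_L (tails_L j ht) _.
- move=> *; rewrite cats0 -rev_nseq -rev_cat; apply/Cn_rev/(Cn_L (tails_L j ht)).
  by rewrite size_rev.
move=> hs h3 hfree /= hsize; case/andP: (inner_frames_two_sided hinner) => /= hx hy.
case: hfree; apply/antipower3_has_antipower/antipower3_zero_gap => //;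
  move: hs h3; rewrite !size_cat size_nseq addnA //; lia.
Qed.

Lemma zeros_cons_antipower_free t m : 3 * size t <= m ->
  ~ has_antipower (nseq m false ++ t) -> ~ has_antipower (nseq m.+1 false ++ t).
Proof.
move=> hm hfree [v [/factorP hv hap]].
move: hv; change (nseq m.+1 false ++ t) with (false :: (nseq m false ++ t)).
rewrite infix_consl => /orP [/prefixP [s hs] | hv]; last first.
  by apply: hfree; exists v; split=> //; apply/factorP.
case: hap => [u1 [u2 [u3 [huv [s12 [s23 [n12 _]]]]]]].
change (nseq m.+1 false ++ t = v ++ s) in hs.
have hsz := congr1 size hs; rewrite huv !size_cat size_nseq /= in hsz.
have : take (size u1 + size u2) (nseq m.+1 false ++ t) = u1 ++ u2.
  by rewrite hs huv -!catA [u1 ++ _]catA take_size_cat ?size_cat.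
rewrite takel_cat ?take_nseq ?size_nseq; try lia.
move/(congr1 (count id)); rewrite count_cat count_nseq mul0n => hc.
by apply: n12; apply: count0_eq => //; lia.
Qed.

Lemma zeros_cat_antipower_free t m :
  ~ has_antipower (nseq (3 * size t) false ++ t) -> ~ has_antipower (nseq m false ++ t).
Proof.
move=> hbase; case: (leqP m (3 * size t)) => hm.
  move=> h; apply: hbase; apply: has_antipower_infix h.
  by rewrite -(subnK hm) nseqD -catA; apply: suffix_infix.
rewrite -(subnK (ltnW hm)); elim: (m - _) => [//|k IH].
by apply: zeros_cons_antipower_free => //; apply: leq_addl.
Qed.

Lemma tails_antipower_free :
  {in tails, forall t, ~~ has_antipowerb (nseq (3 * size t) false ++ t)}.
Proof. by apply/allP; vm_compute. Qed.

Lemma L_antipower_free v : L v -> ~ has_antipower v.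
Proof.
case=> [[k ->]|[[k ->]|[[k ->]|[[i [j ->]]|[[k ->]|[k ->]]]]]].
- by apply: count_le1_antipower_free; rewrite wpow1 count_nseq.
- by rewrite -alt_word_double; apply: alt_word_antipower_free.
- have -> : [:: false] = alt_word (odd k.*2 (+) false) 1 by rewrite odd_double.
  by rewrite -alt_word_double -alt_wordD; apply: alt_word_antipower_free.
- by apply: count_le1_antipower_free; rewrite !wpow1 count_cat /= !count_nseq.
- by rewrite wpow1; apply/zeros_cat_antipower_free/has_antipowerP/tails_antipower_free.
- by rewrite wpow1; apply/zeros_cat_antipower_free/has_antipowerP/tails_antipower_free.
Qed.

Lemma Cn_A P n w : (forall v, P v -> ~ has_antipower v) -> Cn P n w -> A n w.
Proof.
move=> hP [v [/hP hfree [hs hw]]].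
case: hw => [|[|[|]]] ->; split; rewrite ?size_compl ?size_rev //.
- by move/has_antipower_compl.
- by move/has_antipower_rev.
- by move/has_antipower_compl/has_antipower_rev.
Qed.

Theorem theorem4 (n : nat) :
  18 <= n -> 3 %| n ->
  forall w : word, A n w <-> Cn L n w.
Proof.
move=> hn h3 w; split; last exact: Cn_A L_antipower_free.
move=> [hs hfree]; subst n.
case: (antipower_free_candidate hn hfree) => hc; first exact: candidate_Cn.
have hfree' : ~ has_antipower (compl w) by move/has_antipower_compl.
have := @candidate_Cn (compl w); rewrite size_compl => /(_ hn h3 hfree' hc)/Cn_compl.
by rewrite complK.
Qed.
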